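(* Let $k\ge 2$, $n\ge 1$. The reduction $\succ$ on $P_k^n$ is terminating (strongly normalizing), but it is not weakly confluent: there exist $f,r,v$ with $f\succ r$, $f\succ v$ such that there is no $w$ with $r\succeq w$ and $v\succeq w$.
   Context: $Z_k=\{0,1,\dots,k-1\}$; $P_k^n$ is the set of all maps $f:Z_k^n\to Z_k$ in the variables $x_1,\dots,x_n$. A variable $x_i$ is essential in $f$ if there are $a_1,\dots,a_n,b\in Z_k$ with $f(a_1,\dots,a_i,\dots,a_n)\ne f(a_1,\dots,a_{i-1},b,a_{i+1},\dots,a_n)$; $Ess(f)$ is the set of essential variables. For an essential variable $x_i$ of $f$ and $c\in Z_k$, the simple subfunction $f(x_i=c)$ is the function obtained by assigning $c$ to $x_i$ (regarded in $P_k^n$ with $x_i$ fictive); we write $f\succ g$ if $g=f(x_i=c)$ for some essential $x_i$ and $c\in Z_k$, and $\succeq$ denotes the reflexive-transitive closure of $\succ$. *)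

From Stdlib Require Import Relations.
From mathcomp Require Import all_boot.

Set Implicit Arguments. Unset Strict Implicit. Unset Printing Implicit Defensive.

(* Z_k = 'I_k ; a point of Z_k^n is a finite function 'I_n -> 'I_k
   (variable x_i, i : 'I_n, corresponds to x_{i+1}). *)
Definition point (k n : nat) := {ffun 'I_n -> 'I_k}.

Definition Pkn (k n : nat) := {ffun point k n -> 'I_k}.

Definition upd k n (a : point k n) (i : 'I_n) (b : 'I_k) : point k n :=
  [ffun j => if j == i then b else a j].

Definition essential k n (f : Pkn k n) (i : 'I_n) : Prop :=
  exists (a : point k n) (b : 'I_k), f a <> f (upd a i b).

(* simple subfunction f(x_i = c), regarded in P_k^n with x_i fictive *)
Definition subfun k n (f : Pkn k n) (i : 'I_n) (c : 'I_k) : Pkn k n :=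
  [ffun a => f (upd a i c)].

Definition succ k n (f g : Pkn k n) : Prop :=
  exists (i : 'I_n) (c : 'I_k), essential f i /\ g = subfun f i c.

Definition succeq k n : relation (Pkn k n) := clos_refl_trans _ (@succ k n).

From Stdlib Require Import Relations Wf_nat.
From mathcomp Require Import all_boot.

Set Implicit Arguments. Unset Strict Implicit. Unset Printing Implicit Defensive.

(* Each step fixes an essential variable, so the set of essential variables
   strictly shrinks: its size is a decreasing measure.  For non-confluence,
   the projection x_1 reduces to the two distinct constants 0 and 1, and a
   constant has no essential variable, so it is a normal form. *)

Section Reduction.
Variables k n : nat.

Lemma upd_upd_same (a : point k n) i b c : upd (upd a i b) i c = upd a i c.
Proof. by apply/ffunP => j; rewrite !ffunE; case: (j == i). Qed.

Lemma upd_upd_comm (a : point k n) i j b c : j != i ->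
  upd (upd a j b) i c = upd (upd a i c) j b.
Proof.
move=> ji; apply/ffunP => l; rewrite !ffunE.
by case: (eqVneq l i) => [->|//]; rewrite eq_sym (negPf ji).
Qed.

Definition essentialb (f : Pkn k n) (i : 'I_n) : bool :=
  [exists a, [exists b, f a != f (upd a i b)]].

Lemma essentialP f i : reflect (essential f i) (essentialb f i).
Proof.
apply: (iffP existsP) => [[a /existsP [b /eqP fab]] | [a [b fab]]].
  by exists a, b.
by exists a; apply/existsP; exists b; apply/eqP.
Qed.

Definition ess_vars (f : Pkn k n) : {set 'I_n} := [set i | essentialb f i].

Lemma ess_vars_subfun f i c : ess_vars (subfun f i c) \subset ess_vars f :\ i.
Proof.
apply/subsetP => j; rewrite !inE => /existsP [a /existsP [b]].
rewrite !ffunE; case: (eqVneq j i) => [->|ji fab].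
  by rewrite upd_upd_same eqxx.
apply/existsP; exists (upd a i c); apply/existsP; exists b.
by rewrite -upd_upd_comm.
Qed.

Lemma succ_card_ess_vars f g : succ f g -> #|ess_vars g| < #|ess_vars f|.
Proof.
move=> [i [c [/essentialP fi ->]]].
apply: leq_ltn_trans (subset_leq_card (ess_vars_subfun f i c)) _.
by rewrite (cardsD1 i (ess_vars f)) inE fi.
Qed.

Lemma well_founded_succ : well_founded (fun g f : Pkn k n => succ f g).
Proof.
apply: (well_founded_lt_compat _ (fun f => #|ess_vars f|)) => g f fg.
exact/ltP/succ_card_ess_vars.
Qed.

Lemma succeq_normal_form (f w : Pkn k n) :
  (forall g, ~ succ f g) -> succeq f w -> w = f.
Proof.
move=> nf /clos_rt_rt1n_iff fw.
by case: fw nf => // g w' fg _ /(_ g fg).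
Qed.

Lemma const_normal_form (c : 'I_k) g : ~ succ [ffun _ : point k n => c] g.
Proof. by move=> [i [d [[a [b]]]]]; rewrite !ffunE. Qed.

Lemma projection_succ_const (i : 'I_n) (c : 'I_k) :
  essential [ffun a : point k n => a i] i ->
  succ [ffun a : point k n => a i] [ffun _ => c].
Proof.
move=> ess; exists i, c; split=> //.
by apply/ffunP => a; rewrite !ffunE eqxx.
Qed.

End Reduction.

Theorem theorem3 (k n : nat) (hk : 2 <= k) (hn : 1 <= n) :
  (* terminating: no infinite chain f0 > f1 > ... *)
  well_founded (fun g f : Pkn k n => succ f g) /\
  (* not weakly confluent *)
  (exists f r v : Pkn k n,
      succ f r /\ succ f v /\ ~ (exists w : Pkn k n, succeq r w /\ succeq v w)).
Proof.
split; first exact: well_founded_succ.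
pose i0 : 'I_n := Ordinal hn.
pose c0 : 'I_k := Ordinal (ltnW hk).
pose c1 : 'I_k := Ordinal hk.
pose proj : Pkn k n := [ffun a : point k n => a i0].
have ess : essential proj i0.
  by exists [ffun _ => c0], c1; rewrite !ffunE eqxx.
exists proj, [ffun _ => c0], [ffun _ => c1].
split; [exact: projection_succ_const | split; first exact: projection_succ_const].
move=> [w [rw vw]].
have w0 := succeq_normal_form (@const_normal_form _ _ c0) rw.
have w1 := succeq_normal_form (@const_normal_form _ _ c1) vw.
have /ffunP /(_ [ffun _ => c0]) := etrans (esym w0) w1.
by rewrite !ffunE => /(congr1 val).
Qed.
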